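(* Let $\mathcal{P}\subset\mathbb{R}^d$ be a finite set of item vectors, $\bm{q}\in\mathbb{R}^d$, $k>1$ an integer, $\lambda\in[0,1]$, $\mu>0$, and assume $\langle\bm{x},\bm{y}\rangle\ge0$ for all $\bm{x},\bm{y}\in\mathcal{P}\cup\{\bm{q}\}$. Then the set function $f_{avg}:2^{\mathcal{P}}\to\mathbb{R}$, $$f_{avg}(\mathcal{S}) = \tfrac{\lambda}{k}\sum_{\bm{p}\in\mathcal{S}}\langle\bm{p},\bm{q}\rangle - \tfrac{2\mu(1-\lambda)}{k(k-1)}\sum_{\{\bm{p},\bm{p}'\}\subseteq\mathcal{S},\,\bm{p}\neq\bm{p}'}\langle\bm{p},\bm{p}'\rangle,$$ is submodular, i.e., $f_{avg}(\mathcal{S}\cup\{\bm{p}\})-f_{avg}(\mathcal{S})\ge f_{avg}(\mathcal{T}\cup\{\bm{p}\})-f_{avg}(\mathcal{T})$ for all $\mathcal{S}\subseteq\mathcal{T}\subseteq\mathcal{P}$ and $\bm{p}\in\mathcal{P}\setminus\mathcal{T}$.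
   Context: The second sum in $f_{avg}$ runs over unordered pairs of distinct elements of $\mathcal{S}$; $k$ is a fixed parameter (not the size of $\mathcal{S}$). The nonnegativity of inner products is the paper's standing assumption (item and user vectors come from a non-negative matrix factorization). *)

From HB Require Import structures.
From mathcomp Require Import all_boot all_order all_algebra.
From mathcomp Require Import finmap.
Set Implicit Arguments. Unset Strict Implicit. Unset Printing Implicit Defensive.
Import Order.TTheory GRing.Theory Num.Theory.
Local Open Scope ring_scope.
Local Open Scope fset_scope.

Definition dot (R : realFieldType) (d : nat) (x y : 'rV[R]_d) : R :=
  \sum_(i < d) x 0 i * y 0 i.

(* sum of <p,p'> over unordered pairs {p,p'} of distinct elements of S:
   enumerate S without duplicates and sum over index pairs i < j *)
Definition pair_sum (R : realFieldType) (d : nat) (S : {fset 'rV[R]_d}) : R :=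
  let s := enum_fset S in
  \sum_(i < size s) \sum_(j < size s | (i < j)%N)
     dot (nth 0 s i) (nth 0 s j).

Definition f_avg (R : realFieldType) (d : nat) (k : nat) (lam mu : R)
    (q : 'rV[R]_d) (S : {fset 'rV[R]_d}) : R :=
  lam / k%:R * (\sum_(p <- S) dot p q)
  - (2 * mu * (1 - lam)) / (k * (k - 1))%:R * pair_sum S.

(* The marginal gain of adding p to S is (lam/k) <p,q> - c * sum_(x in S) <p,x>
   with a constant c = 2 mu (1 - lam) / (k (k - 1)) >= 0, so only the
   diversity penalty depends on S; as all inner products are nonnegative, that
   penalty can only grow when S is enlarged. *)
From HB Require Import structures.
From mathcomp Require Import all_boot all_order all_algebra finmap.
From mathcomp Require Import lra.
Import Order.TTheory GRing.Theory Num.Theory.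
Local Open Scope ring_scope.

Lemma sum_ltn_pairs_double (V : nmodType) n (g : 'I_n -> 'I_n -> V) :
  (forall i j, g i j = g j i) ->
  (\sum_(i < n) \sum_(j < n | (i < j)%N) g i j) *+ 2 + \sum_(i < n) g i i
    = \sum_(i < n) \sum_(j < n) g i j.
Proof.
move=> g_sym.
have split_row i : \sum_(j < n) g i j
    = \sum_(j < n | (i < j)%N) g i j + g i i + \sum_(j < n | (j < i)%N) g i j.
  rewrite (bigID (fun j : 'I_n => (i < j)%N)) /= -addrA; congr (_ + _).
  rewrite (bigD1 i) ?ltnn //=; congr (_ + _).
  by apply: eq_bigl => j; rewrite -leqNgt ltn_neqAle andbC.
have lower_eq_upper : \sum_(i < n) \sum_(j < n | (j < i)%N) g i j
    = \sum_(i < n) \sum_(j < n | (i < j)%N) g i j.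
  rewrite (exchange_big_dep xpredT) //=.
  by apply: eq_bigr => i _; apply: eq_bigr => j _; rewrite g_sym.
under [RHS]eq_bigr do rewrite split_row.
by rewrite !big_split /= lower_eq_upper mulr2n addrAC.
Qed.

Lemma ler_sum_fsubset (R : numDomainType) (K : choiceType) (X Y : {fset K})
    (F : K -> R) :
  (X `<=` Y)%fset -> {in Y, forall x, 0 <= F x} ->
  \sum_(x <- X) F x <= \sum_(x <- Y) F x.
Proof.
move=> sXY F_ge0; rewrite [leRHS](big_fsetID _ (fun x => x \in X)) /=.
have -> : \sum_(x <- [fset x in Y | x \in X]%fset) F x = \sum_(x <- X) F x.
  by apply: eq_fbigl => x; rewrite !inE /= andb_idl // => /(fsubsetP sXY).
rewrite lerDl big_seq sumr_ge0 // => x.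
by rewrite !inE => /andP[/F_ge0].
Qed.

Section InnerProduct.
Variables (R : realFieldType) (d : nat).
Implicit Types (p : 'rV[R]_d) (S : {fset 'rV[R]_d}).

Lemma dotC : commutative (@dot R d).
Proof. by move=> x y; apply: eq_bigr => i _; rewrite mulrC. Qed.

Lemma pair_sum_double S :
  pair_sum S *+ 2 + \sum_(x <- S) dot x x = \sum_(x <- S) \sum_(y <- S) dot x y.
Proof.
rewrite /pair_sum (big_nth 0) big_mkord sum_ltn_pairs_double; last first.
  by move=> i j; apply: dotC.
by rewrite (big_nth 0) big_mkord; apply: eq_bigr => i _; rewrite (big_nth 0) big_mkord.
Qed.

Lemma pair_sum_fsetU1 S p : p \notin S ->
  pair_sum (p |` S)%fset = pair_sum S + \sum_(x <- S) dot p x.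
Proof.
move=> pNS; apply: (@pmulrnI _ 2) => //=.
have expand : \sum_(x <- (p |` S)%fset) \sum_(y <- (p |` S)%fset) dot x y
    = dot p p + (\sum_(x <- S) dot p x) *+ 2 + \sum_(x <- S) \sum_(y <- S) dot x y.
  rewrite !big_fsetU1 //=.
  under [X in _ + X = _]eq_bigr => x _ do rewrite big_fsetU1 //= [dot x p]dotC.
  by rewrite big_split /= mulr2n !addrA.
have := pair_sum_double (p |` S)%fset.
rewrite expand big_fsetU1 //= -pair_sum_double mulrnDl; lra.
Qed.

End InnerProduct.

Lemma f_avg_fsetU1 (R : realFieldType) d k (lam mu : R) (q p : 'rV[R]_d)
    (S : {fset 'rV[R]_d}) :
  p \notin S ->
  f_avg k lam mu q (p |` S)%fset - f_avg k lam mu q S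
    = lam / k%:R * dot p q
      - 2 * mu * (1 - lam) / (k * (k - 1))%:R * \sum_(x <- S) dot p x.
Proof. by move=> pNS; rewrite /f_avg pair_sum_fsetU1 // big_fsetU1 //=; lra. Qed.

Local Open Scope fset_scope.

Theorem lemma1 (R : realFieldType) (d : nat) (P : {fset 'rV[R]_d})
    (q : 'rV[R]_d) (k : nat) (lam mu : R) :
  (1 < k)%N -> 0 <= lam <= 1 -> 0 < mu ->
  (forall x y, x \in q |` P -> y \in q |` P -> 0 <= dot x y) ->
  forall (S T : {fset 'rV[R]_d}) (p : 'rV[R]_d),
    S `<=` T -> T `<=` P -> p \in P -> p \notin T ->
    f_avg k lam mu q (p |` T) - f_avg k lam mu q T
      <= f_avg k lam mu q (p |` S) - f_avg k lam mu q S.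
Proof.
move=> _ /andP[lam_ge0 lam_le1] mu_gt0 dot_ge0 S T p sST sTP pP pNT.
have pNS : p \notin S by apply: contra pNT; apply: (fsubsetP sST).
rewrite !f_avg_fsetU1 // lerD2l lerN2 ler_wpM2l //.
  by rewrite divr_ge0 // !mulr_ge0 ?subr_ge0 // ltW.
apply: ler_sum_fsubset => // x xT.
by apply: dot_ge0; rewrite !inE ?pP ?(fsubsetP sTP x xT) orbT.
Qed.
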